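(* Let $M,N$ be positive integers and $C_0,\dots,C_{N-1}\in\{0,1,\dots,M-1\}$. For $p\in\{0,\dots,M-1\}$, $q\in\{0,\dots,N-1\}$ let $\bm\psi_{p,q}\in\mathbb{C}^N$ have entries $[\bm\psi_{p,q}]_n=\frac{1}{\sqrt N}e^{j\frac{2\pi p}{M}C_n+j\frac{2\pi q}{N}n}$, $n=0,\dots,N-1$, and let $\bm\Psi_q=[\bm\psi_{0,q},\dots,\bm\psi_{M-1,q}]\in\mathbb{C}^{N\times M}$. Then for all $q_1,q_2\in\{0,\dots,N-1\}$ the matrix $\bm X_{q_1,q_2}:=\bm\Psi_{q_1}^H\bm\Psi_{q_2}\in\mathbb{C}^{M\times M}$ is a circulant matrix.
   Context: $j$ denotes the imaginary unit and $(\cdot)^H$ the conjugate transpose. A circulant matrix is a square matrix in which each row is obtained from the preceding row by a cyclic shift one position to the right, i.e. $[\bm A]_{p_1,p_2}=[\bm A]_{0,(p_2-p_1)\bmod M}$. *)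

From HB Require Import structures.
From mathcomp Require Import all_boot all_order all_algebra.
From mathcomp Require Import complex.
From mathcomp Require Import reals trigo.
Unset Printing Implicit Defensive.
Import Order.TTheory GRing.Theory Num.Theory.
Local Open Scope ring_scope.
Local Open Scope complex_scope.

Definition expj {R : realType} (theta : R) : R[i] := (cos theta) +i* (sin theta).

Definition psi (R : realType) (M N : nat) (C : 'I_N -> nat) (p q : nat) (n : 'I_N) : R[i] :=
  ((Num.sqrt (N%:R : R))^-1)%:C *
  expj ((2 * pi * p%:R / M%:R) * (C n)%:R + (2 * pi * q%:R / N%:R) * n%:R).

Definition Psi (R : realType) (M N : nat) (C : 'I_N -> nat) (q : nat) : 'M[R[i]]_(N, M) :=
  \matrix_(n < N, p < M) psi R M N C p q n.

Definition ctrmx {R : realType} {m n : nat} (A : 'M[R[i]]_(m, n)) : 'M[R[i]]_(n, m) :=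
  (map_mx (fun z => z^*) A)^T.

Definition circulant {T : Type} {M : nat} (A : 'M[T]_M) : Prop :=
  forall (hM : (0 < M)%N) (p1 p2 : 'I_M),
    A p1 p2 = A (Ordinal hM) (Ordinal (ltn_pmod (p2 + M - p1) hM)).

(* Entry (p1, p2) of Psi_q1^H Psi_q2 is (1/N) sum_n e^{j 2 pi (p2 - p1) C_n / M} e^{j 2 pi (q2 - q1) n / N}.
   Since every C_n is an integer, each summand is unchanged when p2 - p1 is shifted by a multiple of M,
   so the entry depends only on (p2 - p1) mod M. *)

From HB Require Import structures.
From mathcomp Require Import all_boot all_order all_algebra.
From mathcomp Require Import complex.
From mathcomp Require Import reals trigo.
From mathcomp Require Import ring.
Import Order.TTheory GRing.Theory Num.Theory.
Local Open Scope ring_scope.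
Local Open Scope complex_scope.

Section Expj.
Variable R : realType.

Lemma conj_real_complex (x : R) : Num.conj (x%:C : R[i]) = x%:C.
Proof. exact: conjc_real. Qed.

Lemma mul_conj_expj (x y : R) : (expj x)^* * expj y = expj (y - x).
Proof. by rewrite /expj /= cosB sinB; congr (_ +i* _); ring. Qed.

Lemma expjD2pi_nat (y : R) (m : nat) : expj (y + 2 * pi * m%:R) = expj y.
Proof.
elim: m => [|m IHm]; first by rewrite mulr0 addr0.
have -> : y + 2 * pi * m.+1%:R = (y + 2 * pi * m%:R) + pi *+ 2.
  by rewrite -mulr_natl mulrS; ring.
by rewrite /expj cosD2pi sinD2pi -/(expj _) IHm.
Qed.

Lemma expj_fracD_period (M c : nat) (a t : R) : (0 < M)%N ->
  expj (2 * pi * (a + M%:R) / M%:R * c%:R + t) = expj (2 * pi * a / M%:R * c%:R + t).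
Proof.
move=> M_gt0; have M_neq0 : (M%:R : R) != 0 by rewrite pnatr_eq0 -lt0n.
rewrite -[RHS](expjD2pi_nat _ c); congr expj; field.
by rewrite M_neq0.
Qed.

Lemma expj_frac_modn (M a c : nat) (t : R) : (0 < M)%N ->
  expj (2 * pi * (a %% M)%:R / M%:R * c%:R + t) = expj (2 * pi * a%:R / M%:R * c%:R + t).
Proof.
move=> M_gt0; rewrite {2}(divn_eq a M).
elim: (a %/ M)%N => [|k IHk]; first by rewrite mul0n add0n.
by rewrite mulSn -addnA addnC natrD expj_fracD_period.
Qed.

End Expj.

Lemma conj_psiM (R : realType) (M N : nat) (C : 'I_N -> nat) (p1 p2 q1 q2 : nat) (n : 'I_N) :
  (psi R M N C p1 q1 n)^* * psi R M N C p2 q2 n =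
  (N%:R^-1)%:C * expj (2 * pi * (p2%:R - p1%:R) / M%:R * (C n)%:R
                       + 2 * pi * (q2%:R - q1%:R) / N%:R * n%:R).
Proof.
have sqrtN2 : (Num.sqrt (N%:R : R))^-1 * (Num.sqrt (N%:R : R))^-1 = N%:R^-1.
  by rewrite -invfM -expr2 sqr_sqrtr ?ler0n.
rewrite /psi rmorphM /= conj_real_complex mulrACA mul_conj_expj -rmorphM /= sqrtN2.
by congr (_ * expj _); ring.
Qed.

Theorem lemma1 (R : realType) (M N : nat) (hM : (0 < M)%N) (hN : (0 < N)%N)
  (C : 'I_N -> nat) (hC : forall n : 'I_N, (C n < M)%N) (q1 q2 : 'I_N) :
  circulant (ctrmx (Psi R M N C q1) *m Psi R M N C q2).
Proof.
move=> M_gt0 p1 p2; rewrite !mxE; apply: eq_bigr => n _.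
rewrite /ctrmx !mxE !conj_psiM subr0 expj_frac_modn //; congr (_ * _).
have p1_le : (p1 <= p2 + M)%N by rewrite (leq_trans (ltnW (ltn_ord p1))) ?leq_addl.
by rewrite natrB // natrD addrAC expj_fracD_period.
Qed.
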